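(* Let $\mathbf{G}=(\mathcal{V},\mathcal{E})$ be a directed graph on $\mathcal{V}=\{1,\dots,m\}$ and let $\tau\ge 0$ be an integer. If the weak vertex-connectivity of $\mathbf{G}$ satisfies $\kappa(\bar{\mathbf{G}})\geq \tau+1$, then the TITAN algorithm (described in the context) is $\mathcal{A}$-private for every set $\mathcal{A}\subseteq\mathcal{V}$ of corrupted nodes with $|\mathcal{A}|\le\tau$.
   Context: $\bar{\mathbf{G}}$ is the undirected graph on $\mathcal{V}$ whose edges are the edges of $\mathcal{E}$ with orientation ignored (i.e. $\mathcal{E}$ together with all reversed edges); the weak vertex-connectivity of $\mathbf{G}$ is the vertex-connectivity $\kappa(\bar{\mathbf{G}})$. For $a'>0$ and real $y$, $\mathrm{mod}(y,a')=y-pa'$ with $p$ the unique integer such that $y-pa'\in[0,a')$. Each node $i$ holds a private input $x_i\in[0,a)$ for a fixed $a>0$. TITAN: each node $i$ draws, for each out-neighbor $j$, an independent $r_{ij}$ uniform on $[0,ma)$ and sends it to $j$; it computes $t_i=\mathrm{mod}\big(\sum_{j\in\mathcal{N}_i^{in}} r_{ji}-\sum_{j\in\mathcal{N}_i^{out}} r_{ij}, ma\big)$ and $\tilde{x}_i=\mathrm{mod}(x_i+t_i,ma)$; then all nodes run a deterministic protocol (repeated Top-$k$ max-type consensus on the pairs $(\tilde x_i,i)$) by which every node learns all of $\tilde{x}_1,\dots,\tilde{x}_m$, and output $\frac1m\mathrm{mod}(\sum_i\tilde x_i,ma)$. Adversary: honest-but-curious, corrupting a set $\mathcal{A}$ of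 nodes; it follows the protocol but observes everything stored, sent and received by corrupted nodes. Its view $\mathrm{View}_{\mathcal{A}}(x)$ consists of the inputs $\{x_i: i\in\mathcal{A}\}$, the perturbed inputs $\{\tilde{x}_i: i\notin\mathcal{A}\}$, and the random numbers $\{r_{ij}: i\in\mathcal{A}\text{ or } j\in\mathcal{A}\}$. The algorithm is $\mathcal{A}$-private if for all input vectors $x,x'\in[0,a)^m$ with $x_i=x'_i$ for all $i\in\mathcal{A}$ and $\sum_{i=1}^m x_i=\sum_{i=1}^m x'_i$, the random variables $\mathrm{View}_{\mathcal{A}}(x)$ and $\mathrm{View}_{\mathcal{A}}(x')$ have identical distributions. *)

From HB Require Import structures.
From mathcomp Require Import all_boot all_order all_algebra.
From mathcomp Require Import all_classical all_reals all_analysis.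
Set Implicit Arguments.
Unset Strict Implicit.
Unset Printing Implicit Defensive.
Import Order.TTheory GRing.Theory Num.Theory.
Local Open Scope classical_set_scope.
Local Open Scope ring_scope.

Definition ubar (m : nat) (e : rel 'I_m) : rel 'I_m :=
  fun u v => (u != v) && (e u v || e v u).

Definition connected_avoiding (m : nat) (g : rel 'I_m) (S : {set 'I_m}) : bool :=
  [forall u, forall v, (u \notin S) ==> (v \notin S) ==>
     connect [rel x y | [&& g x y, x \notin S & y \notin S]] u v].

Definition k_connected (m : nat) (g : rel 'I_m) (k : nat) : bool :=
  (k < m)%N && [forall S : {set 'I_m}, (#|S| < k)%N ==> connected_avoiding g S].

Definition vertex_connectivity (m : nat) (g : rel 'I_m) : nat :=
  \max_(k < m.+1 | k_connected g k) k.

Definition weak_vertex_connectivity (m : nat) (e : rel 'I_m) : nat :=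
  vertex_connectivity (ubar e).

Definition modR (R : realType) (a' y : R) : R :=
  y - (Num.floor (y / a'))%:~R * a'.

(** t_i computed from the realized random numbers r (r i j sent from i to j). *)
Definition titan_t (R : realType) (m : nat) (e : rel 'I_m) (M : R)
    (r : 'I_m -> 'I_m -> R) (i : 'I_m) : R :=
  modR M (\sum_(j | e j i) r j i - \sum_(j | e i j) r i j).

Definition titan_xt (R : realType) (m : nat) (e : rel 'I_m) (M : R)
    (x : 'I_m -> R) (r : 'I_m -> 'I_m -> R) (i : 'I_m) : R :=
  modR M (x i + titan_t e M r i).

(** Indices of view components: inputs x_i, perturbed inputs, random numbers. *)
Definition view_index (m : nat) : Type := (('I_m + 'I_m) + ('I_m * 'I_m))%type.

(** The adversary's view (components not observed are set to the constant 0). *)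
Definition titan_view (R : realType) (m : nat) (e : rel 'I_m) (a : R)
    (A : {set 'I_m}) (x : 'I_m -> R) (r : 'I_m -> 'I_m -> R) :
    view_index m -> R :=
  fun k => match k with
  | inl (inl i) => if i \in A then x i else 0
  | inl (inr i) => if i \notin A then titan_xt e (m%:R * a) x r i else 0
  | inr (i, j) => if e i j && ((i \in A) || (j \in A)) then r i j else 0
  end.

Definition uniform_rv (d : measure_display) (T : measurableType d) (R : realType)
    (P : probability T R) (X : T -> R) (M : R) : Prop :=
  measurable_fun setT X /\
  forall B : set R, measurable B ->
    P (X @^-1` B) = (lebesgue_measure (B `&` `[0%R, M[%classic) * (M^-1)%:E)%E.

Definition independent_family (d : measure_display) (T : measurableType d)
    (R : realType) (P : probability T R) (I : finType) (sel : pred I)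
    (X : I -> T -> R) : Prop :=
  forall B : I -> set R, (forall i, measurable (B i)) ->
    P [set w | forall i, sel i -> B i (X i w)] =
    (\prod_(i | sel i) P (X i @^-1` B i))%E.

(** Cylinder sets of K -> R; they generate the product sigma-algebra. *)
Definition cylinder_sets (K : Type) (R : realType) : set (set (K -> R)) :=
  [set C | exists (k : K) (B : set R), measurable B /\ C = [set f | B (f k)]].

Definition same_distribution (d : measure_display) (T : measurableType d)
    (R : realType) (P : probability T R) (K : Type) (V V' : T -> K -> R) : Prop :=
  forall C : set (K -> R), smallest (sigma_algebra setT) (@cylinder_sets K R) C ->
    P (V @^-1` C) = P (V' @^-1` C).

Definition titan_private (d : measure_display) (T : measurableType d)
    (R : realType) (P : probability T R) (m : nat) (e : rel 'I_m) (a : R)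
    (A : {set 'I_m}) (r : 'I_m -> 'I_m -> T -> R) : Prop :=
  forall x x' : 'I_m -> R,
    (forall i, 0 <= x i < a) -> (forall i, 0 <= x' i < a) ->
    (forall i, i \in A -> x i = x' i) ->
    \sum_i x i = \sum_i x' i ->
    same_distribution P (fun w => titan_view e a A x (fun i j => r i j w))
                        (fun w => titan_view e a A x' (fun i j => r i j w)).

From HB Require Import structures.
From mathcomp Require Import all_boot all_order all_algebra.
From mathcomp Require Import all_classical all_reals all_analysis.
From mathcomp Require Import measurable_realfun.
From mathcomp Require Import ring lra.
Set Implicit Arguments.
Unset Strict Implicit.
Unset Printing Implicit Defensive.
Import Order.TTheory GRing.Theory Num.Theory.
Local Open Scope classical_set_scope.
Local Open Scope ring_scope.

(* Removing A leaves \bar G connected, so the differences x_i - x'_i,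
   which sum to 0 over the honest nodes, can be routed along paths as a flow dl
   on the edges between honest nodes: the net inflow of dl at every honest
   node i is x_i - x'_i.  Rotating each r_ij by dl_ij modulo m a keeps the r_ij
   independent and uniform on [0, m a), does not touch the numbers the
   adversary sees, and shifts t_i by x_i - x'_i modulo m a at every honest i.
   Hence the view on x is the view on x' under rotated randomness, which has
   the same law. *)

Section modR.
Variables (R : realType) (M : R).
Hypothesis M_gt0 : 0 < M.

Lemma modR_itv y : 0 <= modR M y < M.
Proof.
rewrite /modR; have /andP[lo hi] := floor_itv (y / M).
move: lo; rewrite ler_pdivlMr// => lo.
move: hi; rewrite ltr_pdivrMr// intrD mulrDl mul1r => hi.
apply/andP; split; lra.
Qed.

Lemma modR_unique (k : int) (y z : R) : 0 <= z < M -> y = z + k%:~R * M ->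
  modR M y = z.
Proof.
move=> /andP[z_ge0 z_ltM] ->; rewrite /modR.
have -> : Num.floor ((z + k%:~R * M) / M) = k.
  apply: floor_def; rewrite mulrDl mulfK ?gt_eqF// addrC intrD lerDl ltrD2l.
  by rewrite divr_ge0 ?(ltW M_gt0)//= ltr_pdivrMr// mul1r.
by rewrite addrK.
Qed.

Lemma modRDz y (k : int) : modR M (y + k%:~R * M) = modR M y.
Proof.
apply: (modR_unique (k := k + Num.floor (y / M))); first exact: modR_itv.
by rewrite /modR intrD mulrDl; ring.
Qed.

Lemma modRDmr y z : modR M (y + modR M z) = modR M (y + z).
Proof.
have -> : y + modR M z = y + z + (- Num.floor (z / M))%:~R * M.
  by rewrite /modR intrN mulNr addrA.
exact: modRDz.
Qed.

Lemma measurable_modR : measurable_fun setT (modR M).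
Proof.
apply: measurable_funB => //; apply: nondecreasing_measurable => // x y le_xy.
by rewrite ler_pM2r// ler_int le_floor// ler_pM2r// invr_gt0.
Qed.

End modR.

Lemma lebesgue_measure_shift (R : realType) (t : R) (S : set R) :
  measurable S ->
  lebesgue_measure ((+%R^~ t) @^-1` S) = lebesgue_measure S.
Proof.
move=> mS; rewrite -[LHS]/(pushforward lebesgue_measure
  (+%R^~ t : measurableTypeR R -> measurableTypeR R) S).
apply/esym/lebesgue_measure_unique => //.
  by apply: measurable_funD => //; exact: measurable_cst.
move=> ? _ [[a b] _ <-]; apply: esym.
rewrite -[LHS]/(lebesgue_measure ((+%R^~ t) @^-1` `]a, b]%classic)).
have -> : (+%R^~ t) @^-1` `]a, b]%classic = `](a - t), (b - t)]%classic.
  by apply/seteqP; split => x /=; rewrite !in_itv /= => /andP[? ?];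
    apply/andP; split; lra.
rewrite !lebesgue_measure_itv /= !lte_fin ltrD2r -!EFinD.
by congr (if _ then _%:E else _); ring.
Qed.

Definition rotR (R : realType) (M dl u : R) : R := modR M (u + dl).

Section rotation.
Variables (R : realType) (M : R).
Hypothesis M_gt0 : 0 < M.

Lemma measurable_rotR dl : measurable_fun setT (rotR M dl).
Proof.
apply: (measurableT_comp (measurable_modR M_gt0)).
by apply: measurable_funD => //; exact: measurable_cst.
Qed.

Lemma rotR_preimage_itv (c : R) (B : set R) : 0 <= c < M ->
  rotR M c @^-1` B `&` `[0, M[ =
  (+%R^~ c) @^-1` (B `&` `[c, M[) `|` (+%R^~ (c - M)) @^-1` (B `&` `[0, c[).
Proof.
move=> /andP[c_ge0 c_ltM]; rewrite /rotR.
have rot_lo u : 0 <= u < M - c -> modR M (u + c) = u + c.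
  move=> /andP[? ?]; apply: (modR_unique M_gt0 (k := 0)).
    by apply/andP; split; lra.
  by rewrite mul0r addr0.
have rot_hi u : M - c <= u < M -> modR M (u + c) = u + (c - M).
  move=> /andP[? ?]; apply: (modR_unique M_gt0 (k := 1)).
    by apply/andP; split; lra.
  by rewrite mul1r; ring.
apply/seteqP; split => u /=; rewrite !in_itv /=.
  move=> [Bu /andP[u_ge0 u_ltM]]; have [u_lt|u_ge] := ltP u (M - c).
    left; split; first by rewrite -rot_lo// u_ge0.
    by apply/andP; split; lra.
  right; split; first by rewrite -rot_hi// u_ge.
  by apply/andP; split; lra.
move=> [[Bu /andP[? ?]]|[Bu /andP[? ?]]].
  by rewrite rot_lo; [split=> //; apply/andP; split; lra|apply/andP; split; lra].
by rewrite rot_hi; [split=> //; apply/andP; split; lra|apply/andP; split; lra].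
Qed.

Lemma lebesgue_measure_rotR dl (B : set R) : measurable B ->
  lebesgue_measure (rotR M dl @^-1` B `&` `[0, M[) =
  lebesgue_measure (B `&` `[0, M[).
Proof.
move=> mB; have c_itv := modR_itv M_gt0 dl; set c := modR M dl in c_itv.
have -> : rotR M dl @^-1` B = rotR M c @^-1` B.
  by apply/seteqP; split => u /=; rewrite /rotR modRDmr.
have mI (x y : R) : measurable (B `&` `[x, y[) by exact: measurableI.
have mshift (t : R) S : measurable S -> measurable ((+%R^~ t) @^-1` S).
  move=> mS; rewrite -[_ @^-1` _]setTI.
  by apply: measurable_funD => //; exact: measurable_cst.
rewrite rotR_preimage_itv// measureU; first last.
- apply/seteqP; split => u //=; rewrite !in_itv /=.
  by move=> [[_ /andP[? ?]] [_ /andP[? ?]]]; lra.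
- exact: (mshift _ _ (mI _ _)).
- exact: (mshift _ _ (mI _ _)).
transitivity (lebesgue_measure (B `&` `[c, M[%classic) +
              lebesgue_measure (B `&` `[0%R, c[%classic))%E.
  by congr (_ + _)%E; exact: lebesgue_measure_shift.
rewrite -measureU; first last.
- apply/seteqP; split => u //=; rewrite !in_itv /=.
  by move=> [[_ /andP[? ?]] [_ /andP[? ?]]]; lra.
- exact: mI.
- exact: mI.
congr (lebesgue_measure _); rewrite -setIUr; congr (B `&` _).
apply/seteqP; split => u /=; rewrite !in_itv /=.
  by move=> [|] /andP[? ?]; apply/andP; split; lra.
move=> /andP[? ?]; have [?|?] := ltP u c; [right|left].
  by apply/andP; split; lra.
by apply/andP; split; lra.
Qed.

Lemma uniform_rv_rotR d (T : measurableType d) (P : probability T R)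
    (X : T -> R) dl :
  uniform_rv P X M -> uniform_rv P (rotR M dl \o X) M.
Proof.
move=> [mX PX]; split.
  by apply: measurableT_comp => //; exact: measurable_rotR.
move=> B mB; rewrite comp_preimage !PX//; last first.
  by rewrite -[X in measurable X]setTI; exact: measurable_rotR.
by congr (_ * _)%E; exact: lebesgue_measure_rotR.
Qed.

End rotation.

(* [K -> R] has no pointedType instance, which g_sigma_algebraType needs. *)
Definition funR (K : Type) (R : realType) := K -> R.
HB.instance Definition _ (K : Type) (R : realType) := Choice.on (funR K R).
HB.instance Definition _ (K : Type) (R : realType) :=
  isPointed.Build (funR K R) (fun _ => 0).

Definition box (K : Type) (R : realType) (B : K -> set R) : set (funR K R) :=
  [set f | forall k, B k (f k)].

Definition boxes (K : Type) (R : realType) : set (set (funR K R)) :=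
  [set box B | B in [set B : K -> set R | forall k, measurable (B k)]].

(* Boxes form a pi-system, so they determine measures; cylinders are the
   generator used by same_distribution. *)
Definition box_space (K : Type) (R : realType) :=
  g_sigma_algebraType (@boxes K R).
Definition cylinder_space (K : Type) (R : realType) :=
  g_sigma_algebraType (@cylinder_sets K R : set (set (funR K R))).

Section function_spaces.
Variable R : realType.

Lemma boxesI (K : Type) : setI_closed (@boxes K R).
Proof.
move=> _ _ [B1 mB1 <-] [B2 mB2 <-]; exists (fun k => B1 k `&` B2 k).
  by move=> k; exact: measurableI.
apply/seteqP; split => f /=; last by move=> [? ?].
by move=> h; split => k; case: (h k).
Qed.

Lemma boxesT (K : Type) : @boxes K R setT.
Proof. by exists (fun _ => setT) => //; apply/seteqP; split. Qed.

Lemma measurable_coord (K : eqType) (k : K) :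
  measurable_fun setT (fun f : box_space K R => f k).
Proof.
move=> _ B mB; rewrite setTI; apply: sub_sigma_algebra.
exists (fun k' => if k' == k then B else setT); first by move=> k' /=; case: eqP.
apply/seteqP; split => f /=; first by move=> /(_ k); rewrite eqxx.
by move=> Bf k'; case: eqP => // ->.
Qed.

Lemma measurable_fun_box d (T : measurableType d) (K : finType)
    (F : T -> funR K R) :
  (forall k, measurable_fun setT (fun w => F w k)) ->
  measurable_fun setT (F : T -> box_space K R).
Proof.
move=> mF.
apply: (@measurability _ _ _ (box_space K R) setT F (@boxes K R)) => //.
move=> _ [_ [B mB <-] <-]; rewrite setTI.
have -> : F @^-1` box B = \bigcap_k (fun w => F w k) @^-1` B k.
  by apply/seteqP; split => w /= Bw k; [move=> _|]; exact: Bw.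
apply: fin_bigcap_measurable finite_finset _ => k _.
by rewrite -[X in measurable X]setTI; exact: mF.
Qed.

Lemma measurable_fun_cylinder d (T : measurableType d) (K : Type)
    (F : T -> funR K R) :
  (forall k, measurable_fun setT (fun w => F w k)) ->
  measurable_fun setT (F : T -> cylinder_space K R).
Proof.
move=> mF.
apply: (@measurability _ _ _ (cylinder_space K R) setT F (@cylinder_sets K R)).
  by [].
move=> _ [_ [k [B [mB ->]]] <-]; rewrite setTI.
by rewrite -[X in measurable X]setTI; exact: mF.
Qed.

End function_spaces.

(* Coordinates with [dl k = 0] are left as they are instead of being reduced
   mod M, since the adversary may observe them. *)
Definition rotate (R : realType) (K : eqType) (M : R) (dl : K -> R)
    (f : funR K R) : funR K R :=
  fun k => if dl k == 0 then f k else rotR M (dl k) (f k).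

Section rotate.
Variables (R : realType) (M : R).
Hypothesis M_gt0 : 0 < M.

Lemma rotate_winding (K : eqType) (dl : K -> R) (f : funR K R) :
  exists n : K -> int, forall k, rotate M dl f k = f k + dl k + (n k)%:~R * M.
Proof.
exists (fun k => if dl k == 0 then 0 else - Num.floor ((f k + dl k) / M)) => k.
rewrite /rotate /rotR /modR; case: eqP => [->|_]; first by rewrite mul0r !addr0.
by rewrite intrN mulNr.
Qed.

Lemma measurable_rotate (K : finType) (dl : K -> R) :
  measurable_fun setT (rotate M dl : box_space K R -> box_space K R).
Proof.
apply: measurable_fun_box => k; rewrite /rotate; case: eqP => _.
  exact: measurable_coord.
by apply: measurableT_comp; [exact: measurable_rotR|exact: measurable_coord].
Qed.

End rotate.

Section edge_randomness.
Variables (R : realType) (m : nat) (e : rel 'I_m) (d : measure_display)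
  (T : measurableType d) (P : probability T R) (r : 'I_m -> 'I_m -> T -> R).
Variable M : R.
Hypothesis M_gt0 : 0 < M.
Hypothesis r_uniform : forall i j, e i j -> uniform_rv P (r i j) M.
Hypothesis r_indep :
  independent_family P (fun p : 'I_m * 'I_m => e p.1 p.2) (fun p => r p.1 p.2).

Definition edge_rv (w : T) : funR ('I_m * 'I_m) R :=
  fun p => if e p.1 p.2 then r p.1 p.2 w else 0.

Lemma measurable_edge_rv :
  measurable_fun setT (edge_rv : T -> box_space ('I_m * 'I_m) R).
Proof.
apply: measurable_fun_box => p; rewrite /edge_rv.
have [ep|_] := boolP (e p.1 p.2); last exact: measurable_cst.
by case: (r_uniform ep).
Qed.

Lemma edge_rv_box (B : 'I_m * 'I_m -> set R) :
  (forall p, measurable (B p)) -> (forall p, ~~ e p.1 p.2 -> B p 0) ->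
  P (edge_rv @^-1` box B) = (\prod_(p | e p.1 p.2) P (r p.1 p.2 @^-1` B p))%E.
Proof.
move=> mB B0; rewrite -r_indep//; congr (P _).
apply/seteqP; split => w /= Bw p; rewrite /edge_rv.
  by move=> ep; move: (Bw p); rewrite /edge_rv ep.
by case: ifPn => [ep|/B0//]; exact: Bw.
Qed.

Lemma edge_rv_box0 (B : 'I_m * 'I_m -> set R) p :
  ~~ e p.1 p.2 -> ~ B p 0 -> edge_rv @^-1` box B = set0.
Proof.
move=> np nB; apply/seteqP; split => w //= /(_ p).
by rewrite /edge_rv (negbTE np).
Qed.

Section rotation_invariance.
Variable dl : 'I_m * 'I_m -> R.
Hypothesis dl_edges : forall p, ~~ e p.1 p.2 -> dl p = 0.

Lemma edge_rv_rotate_box (B : 'I_m * 'I_m -> set R) :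
  (forall p, measurable (B p)) ->
  P ((rotate M dl \o edge_rv) @^-1` box B) = P (edge_rv @^-1` box B).
Proof.
move=> mB; pose B' p := if dl p == 0 then B p else rotR M (dl p) @^-1` B p.
have mB' p : measurable (B' p).
  rewrite /B'; case: eqP => _ //.
  by rewrite -[X in measurable X]setTI; exact: measurable_rotR.
have B'_off p : ~~ e p.1 p.2 -> B' p = B p.
  by move/dl_edges; rewrite /B' => ->; rewrite eqxx.
have -> : (rotate M dl \o edge_rv) @^-1` box B = edge_rv @^-1` box B'.
  by apply/seteqP; split => w /= Bw p; move: (Bw p);
    rewrite /B' /rotate; case: eqP.
have [B0|] := pselect (forall p, ~~ e p.1 p.2 -> B p 0); last first.
  by move=> /existsNP[p /not_implyP[np nB]]; rewrite !(edge_rv_box0 np) ?B'_off.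
rewrite !edge_rv_box//; last by move=> p np; rewrite B'_off//; exact: B0.
apply: eq_bigr => p ep; rewrite /B'; case: eqP => // _.
have [_ P_rot] := uniform_rv_rotR M_gt0 (dl p) (r_uniform ep).
have [_ P_r] := r_uniform ep.
by rewrite -comp_preimage P_rot ?P_r.
Qed.

Lemma edge_rv_rotate (D : set (box_space ('I_m * 'I_m) R)) : measurable D ->
  P ((rotate M dl \o edge_rv) @^-1` D) = P (edge_rv @^-1` D).
Proof.
move=> mD; have m_rho := measurable_edge_rv.
have m_rot_rho : measurable_fun setT
    (rotate M dl \o edge_rv : T -> box_space ('I_m * 'I_m) R).
  exact: measurableT_comp (measurable_rotate M_gt0 dl) m_rho.
have := @measure_unique _ _ (box_space ('I_m * 'I_m) R) (@boxes _ R)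
  (fun _ => setT) erefl (@boxesI _ _) (fun _ => @boxesT _ _) _
  (pushforward P (rotate M dl \o edge_rv : T -> box_space ('I_m * 'I_m) R))
  (pushforward P (edge_rv : T -> box_space ('I_m * 'I_m) R)).
apply=> //; first by apply/seteqP; split => // x _; exists 0%N.
  by move=> _ [B mB <-]; exact: edge_rv_rotate_box.
move=> _; change (P ((rotate M dl \o edge_rv) @^-1` setT) < +oo)%E.
by rewrite preimage_setT probability_setT ltry.
Qed.

End rotation_invariance.

End edge_randomness.

Lemma sum_if_eq (V : zmodType) (I : finType) (Q : pred I) (s : I)
    (F : I -> V) :
  \sum_(j | Q j) (if j == s then F j else 0) = if Q s then F s else 0.
Proof.
rewrite -big_mkcondr /=; case: ifPn => Qs.
  by rewrite (big_pred1 s) // => j /=; case: eqP => [->|]; rewrite ?Qs ?andbF.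
by rewrite big_pred0 // => j /=; case: eqP => [->|]; rewrite ?(negbTE Qs) ?andbF.
Qed.

Section flows.
Variables (m : nat) (e : rel 'I_m).

Definition net_inflow (V : zmodType) (f : 'I_m * 'I_m -> V) (i : 'I_m) : V :=
  \sum_(j | e j i) f (j, i) - \sum_(j | e i j) f (i, j).

Definition honest_edge (A : {set 'I_m}) (q : 'I_m * 'I_m) : bool :=
  [&& e q.1 q.2, q.1 \notin A & q.2 \notin A].

Definition point_flow (V : zmodType) (q : 'I_m * 'I_m) (c : V) :
    'I_m * 'I_m -> V :=
  fun p => if p == q then c else 0.

Definition edge_flow (V : zmodType) (s t : 'I_m) (c : V) : 'I_m * 'I_m -> V :=
  if e s t then point_flow (s, t) c else point_flow (t, s) (- c).

Variable V : zmodType.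

Lemma net_inflow0 i : net_inflow (fun _ => 0 : V) i = 0.
Proof. by rewrite /net_inflow !big1 // subrr. Qed.

Lemma net_inflowD (f g : 'I_m * 'I_m -> V) i :
  net_inflow (f \+ g) i = net_inflow f i + net_inflow g i.
Proof. by rewrite /net_inflow !big_split /= addrACA opprD. Qed.

Lemma net_inflow_sum (I : finType) (Q : pred I) (F : I -> 'I_m * 'I_m -> V) i :
  net_inflow (fun q => \sum_(k | Q k) F k q) i =
  \sum_(k | Q k) net_inflow (F k) i.
Proof.
rewrite /net_inflow sumrB (exchange_big _ _ _ (fun j => e j i)).
by rewrite (exchange_big _ _ _ (fun j => e i j)).
Qed.

Lemma net_inflow_raddf (W : zmodType) (g : {additive V -> W}) f i :
  net_inflow (g \o f) i = g (net_inflow f i).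
Proof. by rewrite /net_inflow raddfB !raddf_sum. Qed.

Lemma net_inflow_point u v (c : V) i : e u v ->
  net_inflow (point_flow (u, v) c) i =
  (if i == v then c else 0) - (if i == u then c else 0).
Proof.
move=> euv; rewrite /net_inflow /point_flow; congr (_ - _).
  have [->|iv] := eqVneq i v; last first.
    by rewrite big1 // => j _; rewrite xpair_eqE (negbTE iv) andbF.
  under eq_bigr => j _ do rewrite xpair_eqE eqxx andbT.
  by rewrite sum_if_eq euv.
have [->|iu] := eqVneq i u; last first.
  by rewrite big1 // => j _; rewrite xpair_eqE (negbTE iu).
by under eq_bigr => j _ do rewrite xpair_eqE eqxx; rewrite sum_if_eq euv.
Qed.

Lemma net_inflow_edge s t (c : V) i : ubar e s t ->
  net_inflow (edge_flow s t c) i =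
  (if i == t then c else 0) - (if i == s then c else 0).
Proof.
move=> /andP[_ /orP est]; rewrite /edge_flow.
case: ifPn => [/net_inflow_point//|nst].
rewrite net_inflow_point; last by case: est => //; rewrite (negbTE nst).
by case: eqP; case: eqP; rewrite ?subrr ?sub0r ?subr0 ?opprK.
Qed.

Variable A : {set 'I_m}.

Lemma path_flow (c : V) u v :
  connect [rel x y | [&& ubar e x y, x \notin A & y \notin A]] u v ->
  exists f : 'I_m * 'I_m -> V, (forall q, ~~ honest_edge A q -> f q = 0) /\
    forall i,
      net_inflow f i = (if i == v then c else 0) - (if i == u then c else 0).
Proof.
move=> /connectP[p]; elim: p u => [|t p IH] u /=.
  by move=> _ ->; exists (fun _ => 0); split=> // i; rewrite net_inflow0 subrr.
move=> /andP[/and3P[ut uA tA] t_p] v_last.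
have [f [f_supp f_div]] := IH t t_p v_last.
exists (edge_flow u t c \+ f); split=> [q q_dishonest|i].
  rewrite /= f_supp // addr0 /edge_flow /point_flow.
  move: ut q_dishonest => /andP[_ /orP[]] est; case: ifPn => [eut|neut];
    case: eqP => // ->; rewrite /honest_edge /= ?eut ?est ?uA ?tA //.
  by rewrite est in neut.
by rewrite net_inflowD net_inflow_edge // f_div addrC addrA subrK.
Qed.

Lemma flow_exists (b : 'I_m -> V) :
  connected_avoiding (ubar e) A -> \sum_(i | i \notin A) b i = 0 ->
  exists f : 'I_m * 'I_m -> V, (forall q, ~~ honest_edge A q -> f q = 0) /\
    forall i, i \notin A -> net_inflow f i = b i.
Proof.
move=> /forallP conn b_sum.
case: (pickP [pred i | i \notin A]) => [i0 /= i0A|no_honest]; last first.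
  by exists (fun _ => 0); split=> // i; move: (no_honest i) => /= ->.
have flow_to k : exists f : 'I_m * 'I_m -> V, k \notin A ->
    (forall q, ~~ honest_edge A q -> f q = 0) /\
    forall i, net_inflow f i =
      (if i == k then b k else 0) - (if i == i0 then b k else 0).
  have [kA|_] := boolP (k \notin A); last by exists (fun _ => 0).
  have [|f hf] := path_flow (b k) (u := i0) (v := k); last by exists f.
  by move/forallP: (conn i0) => /(_ k); rewrite i0A kA.
have [F hF] := choice flow_to.
exists (fun q => \sum_(k | k \notin A) F k q); split=> [q q_dishonest|i iA].
  by apply: big1 => k kA; have [-> //] := hF k kA.
rewrite net_inflow_sum (eq_bigr _ (fun k kA => (hF k kA).2 i)) sumrB.
under eq_bigr => k _ do rewrite eq_sym.
rewrite sum_if_eq iA; case: (i == i0); first by rewrite b_sum subr0.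
by rewrite big1 ?subr0.
Qed.

End flows.

Lemma k_connected_vertex_connectivity (m : nat) (g : rel 'I_m) :
  (0 < vertex_connectivity g)%N -> k_connected g (vertex_connectivity g).
Proof.
rewrite /vertex_connectivity => vc_gt0.
have [k0 k0_conn] : exists k0 : 'I_m.+1, k_connected g k0.
  apply/existsP; apply: contraLR vc_gt0 => /existsPn none.
  by rewrite -leqNgt leqn0 big_pred0 // => k; exact/negbTE/none.
have [|k k_conn ->] := eq_bigmax_cond (fun k : 'I_m.+1 => nat_of_ord k)
  (A := fun k : 'I_m.+1 => k_connected g k).
  by apply/card_gt0P; exists k0.
exact: k_conn.
Qed.

Section titan_view.
Variables (R : realType) (m : nat) (e : rel 'I_m) (a : R) (A : {set 'I_m}).
Hypothesis M_gt0 : 0 < m%:R * a.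
Let M := m%:R * a.

Lemma titan_view_edges x (r1 r2 : 'I_m -> 'I_m -> R) :
  (forall i j, e i j -> r1 i j = r2 i j) ->
  titan_view e a A x r1 = titan_view e a A x r2.
Proof.
move=> r12; apply/funext => -[[i|i]|[i j]] //=.
  case: ifP => // _; rewrite /titan_xt /titan_t.
  by congr (modR _ (_ + modR _ (_ - _))); apply: eq_bigr => j ej; rewrite r12.
by case: ifP => // /andP[eij _]; exact: r12.
Qed.

Lemma titan_view_rotate x x' (dl : 'I_m * 'I_m -> R)
    (f : funR ('I_m * 'I_m) R) :
  (forall i, i \in A -> x i = x' i) ->
  (forall q, ~~ honest_edge e A q -> dl q = 0) ->
  (forall i, i \notin A -> net_inflow e dl i = x i - x' i) ->
  titan_view e a A x (fun i j => f (i, j)) =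
  titan_view e a A x' (fun i j => rotate M dl f (i, j)).
Proof.
move=> xA dl_supp dl_div; apply/funext => -[[i|i]|[i j]] /=.
- by case: ifP => // /xA.
- case: ifPn => // iA; rewrite /titan_xt /titan_t.
  change (modR M (x i + modR M (net_inflow e f i)) =
          modR M (x' i + modR M (net_inflow e (rotate M dl f) i))).
  have [n rotE] := rotate_winding M dl f.
  have -> : rotate M dl f = f \+ dl \+ (( *~%R M) \o n).
    by apply/funext => p; rewrite rotE /= mulrzl.
  rewrite !(modRDmr M_gt0) !net_inflowD net_inflow_raddf dl_div //= -mulrzl.
  by rewrite -(modRDz M_gt0 _ (net_inflow e n i)) /M; congr (modR _ _); ring.
- case: (boolP (e i j && _)) => // /andP[eij hA].
  rewrite /rotate dl_supp ?eqxx //.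
  by rewrite /honest_edge /= eij; case/orP: hA => ->; rewrite ?andbF.
Qed.

Lemma measurable_net_inflow i :
  measurable_fun setT (fun f : box_space ('I_m * 'I_m) R => net_inflow e f i).
Proof.
rewrite /net_inflow; apply: measurable_funB;
  under eq_fun do rewrite big_mkcond;
  apply: measurable_sum => j; case: (e _ _);
  by [exact: measurable_coord|exact: measurable_cst].
Qed.

Lemma measurable_titan_view x :
  measurable_fun setT (fun f : box_space ('I_m * 'I_m) R =>
    titan_view e a A x (fun i j => f (i, j)) : cylinder_space (view_index m) R).
Proof.
apply: measurable_fun_cylinder => -[[i|i]|[i j]] /=.
- by case: (i \in A); exact: measurable_cst.
- case: (i \in A) => /=; first exact: measurable_cst.
  apply: measurableT_comp; first exact: measurable_modR.
  apply: measurable_funD; first exact: measurable_cst.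
  apply: measurableT_comp; first exact: measurable_modR.
  exact: measurable_net_inflow.
- by case: (e i j && _); [exact: measurable_coord|exact: measurable_cst].
Qed.

End titan_view.

Theorem theorem3 (R : realType) (m : nat) (e : rel 'I_m) (tau : nat) (a : R)
  (A : {set 'I_m}) (d : measure_display) (T : measurableType d)
  (P : probability T R) (r : 'I_m -> 'I_m -> T -> R) :
  0 < a ->
  (tau.+1 <= weak_vertex_connectivity e)%N ->
  (#|A| <= tau)%N ->
  (forall i j, e i j -> uniform_rv P (r i j) (m%:R * a)) ->
  independent_family P (fun p : 'I_m * 'I_m => e p.1 p.2) (fun p => r p.1 p.2) ->
  titan_private P e a A r.
Proof.
move=> a_gt0 tau_lt_wvc A_le_tau r_uniform r_indep x x' _ _ xA sum_xx' C mC.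
have wvc_gt0 : (0 < weak_vertex_connectivity e)%N.
  exact: leq_trans tau_lt_wvc.
have /andP[wvc_lt_m /forallP/(_ A)/implyP conn] :=
  k_connected_vertex_connectivity wvc_gt0.
have {}conn := conn (leq_ltn_trans A_le_tau tau_lt_wvc).
have M_gt0 : 0 < m%:R * a.
  by rewrite mulr_gt0 // ltr0n (leq_ltn_trans (leq0n _) wvc_lt_m).
have honest_sum : \sum_(i | i \notin A) (x i - x' i) = 0.
  have : \sum_i (x i - x' i) = 0 by rewrite sumrB sum_xx' subrr.
  by rewrite (bigID (mem A)) /= big1 ?add0r // => i /xA ->; rewrite subrr.
have [dl [dl_supp dl_div]] := flow_exists conn honest_sum.
have dl_edges q : ~~ e q.1 q.2 -> dl q = 0.
  by move=> nq; apply: dl_supp; rewrite /honest_edge (negbTE nq).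
have view_edge_rv y : (fun w => titan_view e a A y (fun i j => r i j w)) =
    (fun w => titan_view e a A y (fun i j => edge_rv e r w (i, j))).
  apply/funext => w; apply: titan_view_edges => i j eij.
  by rewrite /edge_rv /= eij.
rewrite !view_edge_rv.
under [X in P (X @^-1` C)]eq_fun => w do
  rewrite (titan_view_rotate M_gt0 (edge_rv e r w) xA dl_supp dl_div).
have := measurable_titan_view e A M_gt0 x' measurableT mC.
rewrite setTI => mVC.
exact: (edge_rv_rotate M_gt0 r_uniform r_indep dl_edges mVC).
Qed.
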